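(* Let $\mathbb{F}$ be an infinite field with $\operatorname{char}(\mathbb{F})\neq 2$ and let $G$ be a non-abelian group with a group involution $\ast$ and a non-trivial orientation $\sigma:G\to\{\pm1\}$ such that $gg^\ast\in N=\ker\sigma$ for all $g\in G$. Suppose $\mathbb{F}G$ is normal with respect to the oriented involution $\circledast$ and that $N$ is abelian. Then $x^\ast=x$ for all $x\in G\setminus N$, and $n^\ast=a^{-1}na=ana^{-1}$ for all $n\in N$ and all $a\in G\setminus N$.
   Context: A group involution on $G$ is a map $\ast:G\to G$ with $(gh)^\ast=h^\ast g^\ast$ and $(g^\ast)^\ast=g$. An orientation is a group homomorphism $\sigma:G\to\{\pm1\}$. The oriented involution is $(\sum_g\alpha_g g)^\circledast=\sum_g\alpha_g\sigma(g)g^\ast$ on $\mathbb{F}G$. $\mathbb{F}G$ is normal if $\alpha\alpha^\circledast=\alpha^\circledast\alpha$ for all $\alpha\in\mathbb{F}G$. *)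

From HB Require Import structures.
From mathcomp Require Import all_boot all_order all_algebra.
From mathcomp Require Import monoid.
Set Implicit Arguments. Unset Strict Implicit. Unset Printing Implicit Defensive.
Import GRing.Theory.

Definition group_involution (G : groupType) (star : G -> G) : Prop :=
  (forall g h : G, star (g * h)%g = (star h * star g)%g) /\
  (forall g : G, star (star g) = g).

Definition orientation (G : groupType) (sigma : G -> int) : Prop :=
  (forall g : G, sigma g = 1%R \/ sigma g = (-1)%R) /\
  (forall g h : G, sigma (g * h)%g = (sigma g * sigma h)%R).

(* Elements of the group algebra FG are represented by finite formal sums
   sum_i a_i g_i, given as a list of pairs (a_i, g_i).  Two representations
   denote the same element of FG iff they have the same coefficient function. *)
Definition gsum (F : fieldType) (G : groupType) := seq (F * G).

Definition gcoef (F : fieldType) (G : groupType) (s : gsum F G) (g : G) : F :=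
  (\sum_(p <- s | p.2 == g) p.1)%R.

Definition gmul_coef (F : fieldType) (G : groupType) (s t : gsum F G) (g : G) : F :=
  (\sum_(p <- s) \sum_(q <- t | (p.2 * q.2)%g == g) p.1 * q.1)%R.

Definition oinv (F : fieldType) (G : groupType) (star : G -> G) (sigma : G -> int)
  (s : gsum F G) : gsum F G :=
  [seq ((p.1 * (sigma p.2)%:~R)%R, star p.2) | p <- s].

Definition FG_normal (F : fieldType) (G : groupType) (star : G -> G)
  (sigma : G -> int) : Prop :=
  forall (s : gsum F G) (g : G),
    gmul_coef s (oinv star sigma s) g = gmul_coef (oinv star sigma s) s g.

(* Normality tested on a single group element g gives g g* = g* g.  Tested on
   g + h it then says that the formal sums sigma(h) g h* + sigma(g) h g* and
   sigma(g) g* h + sigma(h) h* g coincide; as char F <> 2, the two pairs of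
   group elements involved must be equal as unordered pairs, which leaves two
   alternatives for every pair (g, h).  Since N is abelian of index 2 in the
   non-abelian group G, each a outside N fails to commute with some n0 in N;
   confronting the alternatives for (a, n0), (a, a n0) and (a, n n0) rules out
   everything except a* = a and a n = n* a, n a = a n*. *)

From HB Require Import structures.
From mathcomp Require Import all_boot all_order all_algebra monoid ring.
From Stdlib Require Import Classical.
Import GRing.Theory.
Set Implicit Arguments. Unset Strict Implicit.
Local Open Scope ring_scope.

Lemma indicator2_eq (F : fieldType) (T : eqType) (p q r t : T) :
  2%:R != 0 :> F ->
  (forall z, (p == z)%:R + (q == z)%:R = (r == z)%:R + (t == z)%:R :> F) ->
  (p = r /\ q = t) \/ (p = t /\ q = r).
Proof.
move=> two_neq0 E.
have [rp|rp] := eqVneq r p.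
  subst r; left; split => //; have := E q; rewrite eqxx => /addrI.
  by case: eqP => // _ /eqP; rewrite oner_eq0.
have [tp|tp] := eqVneq t p.
  subst t; right; split => //; have := E q; rewrite eqxx addrC => /addIr.
  by case: eqP => // _ /eqP; rewrite oner_eq0.
have := E p; rewrite eqxx (negbTE rp) (negbTE tp) addr0.
by case: eqP => _ /eqP; rewrite ?(negbTE two_neq0) ?addr0 ?oner_eq0.
Qed.

Lemma gmul_coefE (F : fieldType) (G : groupType) (s t : gsum F G) (z : G) :
  gmul_coef s t z = \sum_(p <- s) \sum_(q <- t) p.1 * q.1 * (p.2 * q.2 == z)%g%:R.
Proof.
apply: eq_bigr => p _; rewrite big_mkcond; apply: eq_bigr => q _.
by case: eqP; rewrite ?mulr1 ?mulr0.
Qed.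

Section Orientation.

Variables (G : groupType) (sigma : G -> int).
Hypothesis sigmaP : orientation sigma.

Local Open Scope group_scope.

Lemma orientation_neq1 x : sigma x <> 1%R -> sigma x = (-1)%R.
Proof. by case: sigmaP => /(_ x) []. Qed.

Lemma orientation1 : sigma 1 = 1%R.
Proof. by case: sigmaP => /(_ 1) [] // s1 /(_ 1 1); rewrite mulg1 s1. Qed.

Lemma orientationV x : sigma x^-1 = sigma x.
Proof.
have := orientation1; rewrite -(mulgV x); case: sigmaP => sign ->.
by case: (sign x) => ->; case: (sign x^-1) => ->.
Qed.

Lemma orientationVM x y : sigma (x^-1 * y) = (sigma x * sigma y)%R.
Proof. by case: sigmaP => _ ->; rewrite orientationV. Qed.

End Orientation.

Section IndexTwoKernel.

Variables (G : groupType) (sigma : G -> int).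
Hypothesis sigmaP : orientation sigma.
Hypothesis kerAbelian :
  forall n m : G, sigma n = 1%R -> sigma m = 1%R -> commute n m.

Local Open Scope group_scope.

Lemma kernel_centralized_abelian a :
  sigma a = (-1)%R -> (forall n, sigma n = 1%R -> commute a n) ->
  forall g h : G, commute g h.
Proof.
move=> sa ca.
have central x n : sigma n = 1%R -> commute x n.
  move=> sn; have [sx|/eqP/(orientation_neq1 sigmaP) sx] := eqVneq (sigma x) 1%R.
    exact: kerAbelian.
  rewrite -(mulVKg a x); apply/commute_sym/commuteM; apply/commute_sym.
    exact: ca.
  by apply: kerAbelian => //; rewrite (orientationVM sigmaP) sa sx.
move=> g h; have [sh|/eqP/(orientation_neq1 sigmaP) sh] := eqVneq (sigma h) 1%R.
  exact: central.
have [sg|/eqP/(orientation_neq1 sigmaP) sg] := eqVneq (sigma g) 1%R.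
  exact/commute_sym/central.
rewrite -(mulVKg g h); apply/commuteM; first exact: commute_refl.
by apply: central; rewrite (orientationVM sigmaP) sg sh.
Qed.

Lemma exists_noncommuting_kernel a :
  (exists g h : G, ~ commute g h) -> sigma a = (-1)%R ->
  exists2 n, sigma n = 1%R & ~ commute a n.
Proof.
move=> [g [h ngh]] sa; apply: NNPP => nex; apply/ngh/(kernel_centralized_abelian sa).
by move=> n sn; apply: NNPP => can; apply: nex; exists n.
Qed.

End IndexTwoKernel.

Section NormalGroupAlgebra.

Variables (F : fieldType) (G : groupType) (star : G -> G) (sigma : G -> int).
Hypotheses (sigmaP : orientation sigma) (normalFG : FG_normal F star sigma).
Hypothesis charF_neq2 : 2%N \notin [pchar F].

Local Notation "[ x == z ]" := ((x == z)%g%:R : F) (x at level 69).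

Lemma sign_neq0 g : (sigma g)%:~R != 0 :> F.
Proof. by case: sigmaP => /(_ g) [] ->; rewrite ?oppr_eq0 oner_eq0. Qed.

Lemma normal_commute_star g : commute g (star g).
Proof.
have := normalFG [:: (1, g)] (g * star g)%g.
rewrite !gmul_coefE !big_cons !big_nil /= eqxx !addr0 !mul1r !mulr1.
by case: eqP => // _ /eqP; rewrite mulr0 (negbTE (sign_neq0 g)).
Qed.

Lemma normal_pair_coef g h z :
  (sigma h)%:~R * [g * star h == z] + (sigma g)%:~R * [h * star g == z] =
  (sigma g)%:~R * [star g * h == z] + (sigma h)%:~R * [star h * g == z].
Proof.
have := normalFG [:: (1, g); (1, h)] z.
rewrite !gmul_coefE !big_cons !big_nil /= !addr0 !mul1r !mulr1.
rewrite -(normal_commute_star g) -(normal_commute_star h).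
by rewrite -!addrA => /addrI; rewrite !addrA => /addIr.
Qed.

Lemma two_neq0 : 2%:R != 0 :> F.
Proof. by apply: contra charF_neq2 => two0; rewrite inE /= two0. Qed.

Lemma normal_pair_same_sign g h : sigma g = sigma h ->
  (g * star h = star g * h /\ h * star g = star h * g)%g \/
  (g * star h = star h * g /\ h * star g = star g * h)%g.
Proof.
move=> sgh; apply: (indicator2_eq two_neq0) => z.
have := normal_pair_coef g h z; rewrite sgh -!mulrDr.
exact/mulfI/sign_neq0.
Qed.

Lemma normal_pair_opposite_sign g h : sigma g = (- sigma h)%R ->
  (g * star h = h * star g /\ star g * h = star h * g)%g \/
  (g * star h = star h * g /\ star g * h = h * star g)%g.
Proof.
move=> sgh; apply: (indicator2_eq two_neq0) => z.
apply/(mulfI (sign_neq0 h))/eqP; rewrite -subr_eq0.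
(* Up to ring identities, the goal is the difference of the two sides of
   normal_pair_coef. *)
have /eqP := normal_pair_coef g h z; rewrite -subr_eq0 sgh => /eqP <-.
apply/eqP; ring.
Qed.

Hypothesis starM : forall g h : G, star (g * h)%g = (star h * star g)%g.
Hypothesis sigma_mul_star : forall g : G, sigma (g * star g)%g = 1.
Hypothesis kerAbelian :
  forall n m : G, sigma n = 1 -> sigma m = 1 -> commute n m.

Local Open Scope group_scope.

Lemma orientation_star x : sigma (star x) = sigma x.
Proof.
have := sigma_mul_star x; case: sigmaP => sign ->.
by case: (sign x) => ->; case: (sign (star x)) => ->.
Qed.

Lemma commute_star_kernel a n :
  sigma n = 1%R -> commute (star a) n -> commute a n.
Proof.
move=> sn; have [u su ->] : exists2 u, sigma u = 1%R & star a = a * u.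
  exists (a^-1 * star a); last by rewrite mulVKg.
  by rewrite (orientationVM sigmaP) orientation_star; case: sigmaP => /(_ a) [] ->.
by rewrite /commute -mulgA (kerAbelian su sn) !mulgA => /mulIg.
Qed.

Lemma star_fixed_of_noncommuting a n0 :
  sigma a = (-1)%R -> sigma n0 = 1%R -> ~ commute a n0 -> star a = a.
Proof.
move=> sa sn0 nc; have nc' : ~ commute (star a) n0 by move/(commute_star_kernel sn0).
have san0 : sigma (a * n0) = (-1)%R by case: sigmaP => _ ->; rewrite sa sn0.
have ca := normal_commute_star a.
case: (@normal_pair_opposite_sign a n0) => [|[_ an0]|[_ /nc' []]]; first by rewrite sa sn0.
case: (@normal_pair_same_sign a (a * n0)) => [|[_ E]|[_ E]]; first by rewrite sa san0.
  move: E; rewrite starM -(mulgA (star n0)) -ca mulgA => /mulIg.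
  by rewrite -an0 => /mulIg.
by case: nc'; move: E; rewrite mulgA -ca -!mulgA => /mulgI.
Qed.

Lemma star_kernel_of_noncommuting a n :
  star a = a -> sigma a = (-1)%R -> sigma n = 1%R -> ~ commute a n ->
  a * n = star n * a /\ n * a = a * star n.
Proof.
move=> fa sa sn nc.
case: (@normal_pair_opposite_sign a n) => [|[an1 an2]|[_ can]]; first by rewrite sa sn.
  by rewrite fa in an1 an2.
by case: nc; rewrite fa in can.
Qed.

Lemma star_kernel a n n0 :
  star a = a -> sigma a = (-1)%R -> sigma n = 1%R -> sigma n0 = 1%R ->
  ~ commute a n0 -> a * n = star n * a /\ n * a = a * star n.
Proof.
move=> fa sa sn sn0 nc.
case: (@normal_pair_opposite_sign a n) => [|[an1 an2]|[_ can]]; first by rewrite sa sn.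
  by rewrite fa in an1 an2.
rewrite fa in can; suff fn : star n = n by rewrite fn can.
have [an0 _] := star_kernel_of_noncommuting fa sa sn0 nc.
have snn0 : sigma (n * n0) = 1%R by case: sigmaP => _ ->; rewrite sn sn0.
case: (@normal_pair_opposite_sign a (n * n0)) => [|[_ E]|[_ E]]; first by rewrite sa snn0.
  move: E; rewrite fa starM mulgA can -mulgA an0 mulgA => /mulIg.
  by rewrite (kerAbelian sn) ?orientation_star // => /mulgI <-.
by case: nc; move: E; rewrite fa mulgA can -!mulgA => /mulgI.
Qed.

Hypothesis nonabelian : exists g h : G, ~ commute g h.

Lemma star_outside_kernel a : sigma a <> 1%R -> star a = a.
Proof.
move/(orientation_neq1 sigmaP) => sa.
have [n0 sn0 nc] := exists_noncommuting_kernel sigmaP kerAbelian nonabelian sa.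
exact: star_fixed_of_noncommuting sa sn0 nc.
Qed.

Lemma star_kernel_conj n a : sigma n = 1%R -> sigma a <> 1%R ->
  star n = a^-1 * n * a /\ star n = a * n * a^-1.
Proof.
move=> sn /[dup] /star_outside_kernel fa /(orientation_neq1 sigmaP) sa.
have [n0 sn0 nc] := exists_noncommuting_kernel sigmaP kerAbelian nonabelian sa.
have [an na] := star_kernel fa sa sn sn0 nc.
by split; [rewrite -mulgA na mulKg | rewrite an mulgK].
Qed.

End NormalGroupAlgebra.

Theorem lemma9 (F : fieldType) (G : groupType) (star : G -> G) (sigma : G -> int) :
  (* F infinite *)
  (forall s : seq F, exists x : F, x \notin s) ->
  (* char F <> 2 *)
  (2%N \notin [pchar F])%R ->
  (* G non-abelian *)
  (exists g h : G, (g * h)%g <> (h * g)%g) ->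
  group_involution star ->
  orientation sigma ->
  (* sigma non-trivial *)
  (exists g : G, sigma g = (-1)%R) ->
  (* g g^* in N = ker sigma *)
  (forall g : G, sigma (g * star g)%g = 1%R) ->
  FG_normal F star sigma ->
  (* N abelian *)
  (forall n m : G, sigma n = 1%R -> sigma m = 1%R -> (n * m)%g = (m * n)%g) ->
  (forall x : G, sigma x <> 1%R -> star x = x) /\
  (forall n a : G, sigma n = 1%R -> sigma a <> 1%R ->
     star n = (a^-1 * n * a)%g /\ star n = (a * n * a^-1)%g).
Proof.
move=> _ charF_neq2 nonabelian [starM _] sigmaP _ sigma_mul_star normalFG kerAbelian.
by split=> [x | n a]; [exact: star_outside_kernel | exact: star_kernel_conj].
Qed.
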